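(* Let $N=(P,T,F,I,O)$ be a pWF net with a place $p^*$ and a transition $t^*$ such that $p^*\bullet=\{t^*\}$, $\bullet t^*=\{p^*\}$, $p^*\notin I\cup O$, and $F\cap(\bullet p^*\times t^*\bullet)=\emptyset$. Let $M$ be the net with input set $I$ and output set $O$ obtained from $N$ by removing $p^*$, $t^*$ and all edges incident to them, and adding all edges in $\bullet p^*\times t^*\bullet$ (preset and postset taken in $N$). Then $M$ is a pWF net, and if $N$ is sub-sound then $M$ is sub-sound.
   Context: Petri nets and markings. A Petri net is a triple $(P,T,F)$ with $P$ a finite set of places, $T$ a finite set of transitions, $P\cap T=\emptyset$, and $F\subseteq (P\times T)\cup(T\times P)$. For a node $x$, $\bullet x=\{y\mid (y,x)\in F\}$, $x\bullet=\{y\mid (x,y)\in F\}$. A marking is a multiset over $P$ (a function $P\to\mathbb N$); sets of places are identified with bags of multiplicity one, $+,-,\le$ are pointwise, and $k.m$ is the sum of $k$ copies of $m$. Transition $t$ is enabled at $m$ iff $\bullet t\le m$, firing gives $m-\bullet t+t\bullet$, and $m\xrightarrow{*}m'$ denotes reachability by a finite (possibly empty) firing sequence. A pWF net is $(P,T,F,I,O)$ with $(P,T,F)$ a Petri net, $I,O\subseteq P$ non-empty (input/output places), every node reachable by a directed path from some node of $I$, and some node of $O$ reachable from every node; input places may have incoming edges and output places outgoing edges. Sub-soundness. A pWF net is sub-sound if for all integers $k\ge k'\ge 0$ and every marking $m'$: if $k.I\xrightarrow{*}m'+k'.O$ then $m'\xrightarrow{*}(k-k').O$. *)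

From mathcomp Require Import all_boot.
Set Implicit Arguments.
Unset Strict Implicit.
Unset Printing Implicit Defensive.

(* A Petri net (P,T,F): places P and transitions T are (disjoint) finite types;
   the flow relation F is split into its P x T part [pre] and T x P part [post]:
   (p,t) \in F <-> pre p t,   (t,p) \in F <-> post t p. *)

Definition marking (P : finType) := {ffun P -> nat}.

Definition bag (P : finType) (A : {set P}) : marking P :=
  [ffun p => nat_of_bool (p \in A)].

Definition madd (P : finType) (m1 m2 : marking P) : marking P :=
  [ffun p => m1 p + m2 p].
Definition mscale (P : finType) (k : nat) (m : marking P) : marking P :=
  [ffun p => k * m p].
Definition mle (P : finType) (m1 m2 : marking P) : Prop :=
  forall p, m1 p <= m2 p.

Definition preT (P T : finType) (pre : P -> T -> bool) (t : T) : marking P :=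
  [ffun p => nat_of_bool (pre p t)].
Definition postT (P T : finType) (post : T -> P -> bool) (t : T) : marking P :=
  [ffun p => nat_of_bool (post t p)].

Definition fire_step (P T : finType) (pre : P -> T -> bool) (post : T -> P -> bool)
  (m m' : marking P) : Prop :=
  exists t : T, mle (preT pre t) m /\
    m' = [ffun p => m p - preT pre t p + postT post t p].

Inductive reach (P T : finType) (pre : P -> T -> bool) (post : T -> P -> bool)
  : marking P -> marking P -> Prop :=
| reach_refl m : reach pre post m m
| reach_step m1 m2 m3 : fire_step pre post m1 m2 -> reach pre post m2 m3 ->
    reach pre post m1 m3.

Definition flowRel (P T : finType) (pre : P -> T -> bool) (post : T -> P -> bool)
  : rel (P + T) :=
  fun x y => match x, y with
             | inl p, inr t => pre p t
             | inr t, inl p => post t p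
             | _, _ => false
             end.

Definition pWF (P T : finType) (pre : P -> T -> bool) (post : T -> P -> bool)
  (I O : {set P}) : Prop :=
  [/\ I != set0, O != set0,
      (forall x : P + T, exists2 i, i \in I & connect (flowRel pre post) (inl i) x) &
      (forall x : P + T, exists2 o, o \in O & connect (flowRel pre post) x (inl o))].

Definition sub_sound (P T : finType) (pre : P -> T -> bool) (post : T -> P -> bool)
  (I O : {set P}) : Prop :=
  forall (k k' : nat) (m' : marking P), k' <= k ->
    reach pre post (mscale k (bag I)) (madd m' (mscale k' (bag O))) ->
    reach pre post m' (mscale (k - k') (bag O)).

Definition red_pre (P T : finType) (pre : P -> T -> bool) (ps : P) (ts : T)
  (p : {p : P | p != ps}) (t : {t : T | t != ts}) : bool :=
  pre (val p) (val t).
Definition red_post (P T : finType) (post : T -> P -> bool) (ps : P) (ts : T)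
  (t : {t : T | t != ts}) (p : {p : P | p != ps}) : bool :=
  post (val t) (val p) || (post (val t) ps && post ts (val p)).
Definition red_set (P : finType) (ps : P) (A : {set P}) : {set {p : P | p != ps}} :=
  [set p | val p \in A].
Arguments red_pre {P T} pre ps ts p t.
Arguments red_post {P T} post ps ts t p.
Arguments red_set {P} ps A.

From mathcomp Require Import all_boot zify.
Set Implicit Arguments.
Unset Strict Implicit.
Unset Printing Implicit Defensive.

(* Both halves are simulation
   arguments between N and M, developed in a section over the hypotheses.
   - Markings: an M-marking m is the N-marking [emb m] with ps empty, and an
     M-step by t is simulated by N firing t and then, if t fills ps, ts.
     Conversely an N-marking n is seen in M as [proj n], where the tokens on
     ps are already moved to the postset of ts: an N-step by ts is then
     invisible and any other N-step is an M-step.  Since [proj (emb m) = m]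
     and both maps respect the initial/final bags, sub-soundness transfers
     (lemma [red_sub_sound]), using that step simulations lift to firing
     sequences ([reach_map]).
   - Graphs: an N-path between M-nodes shortens to an M-path by replacing
     every detour  t -> ps -> ts -> p  by the new edge  t -> p.  This is a
     forward (resp. backward) simulation relation between the flow graphs;
     generic lemmas lift one-edge simulations to [connect] and give the
     connectivity conditions of pWF (lemma [red_pWF]). *)

Section Reachability.
Variables (P T : finType) (pre : P -> T -> bool) (post : T -> P -> bool).

Lemma reach_trans m1 m2 m3 :
  reach pre post m1 m2 -> reach pre post m2 m3 -> reach pre post m1 m3.
Proof. by elim=> // a b c hs _ IH /IH; apply: reach_step hs. Qed.

Lemma reach_eq m1 m2 : m1 = m2 -> reach pre post m1 m2.
Proof. by move=> ->; exact: reach_refl. Qed.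

Lemma reach_one m1 m2 : fire_step pre post m1 m2 -> reach pre post m1 m2.
Proof. by move=> h; apply: reach_step h (reach_refl _ _ _). Qed.

End Reachability.

Lemma reach_map (P T P' T' : finType) (pre : P -> T -> bool) (post : T -> P -> bool)
    (pre' : P' -> T' -> bool) (post' : T' -> P' -> bool) (f : marking P -> marking P') :
  (forall m m', fire_step pre post m m' -> reach pre' post' (f m) (f m')) ->
  forall m m', reach pre post m m' -> reach pre' post' (f m) (f m').
Proof.
move=> hstep m m'; elim=> [n | a b c hs _ IH]; first exact: reach_refl.
exact: reach_trans (hstep _ _ hs) IH.
Qed.

Lemma connect_fwd_sim (X Y : finType) (e : rel X) (e' : rel Y) (R : X -> Y -> Prop) :
  (forall x z y, e x z -> R x y -> exists2 y', R z y' & connect e' y y') ->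
  forall x z y, connect e x z -> R x y -> exists2 y', R z y' & connect e' y y'.
Proof.
move=> sim x z y /connectP [s pth ->] {z}.
elim: s x y pth => [|a s IH] x y /=; first by move=> _ Rxy; exists y.
case/andP=> exa pth /(sim _ _ _ exa) [y1 R1 c1].
have [y2 R2 c2] := IH _ _ pth R1; exists y2 => //; exact: connect_trans c2.
Qed.

(* The same for edges entering an R-related node, by reversing both graphs. *)
Lemma connect_bwd_sim (X Y : finType) (e : rel X) (e' : rel Y) (R : X -> Y -> Prop) :
  (forall x z y', e x z -> R z y' -> exists2 y, R x y & connect e' y y') ->
  forall x z y', connect e x z -> R z y' -> exists2 y, R x y & connect e' y y'.
Proof.
move=> sim x z y' cxz Rzy.
have sim_rev z1 x1 y1 : [rel a b | e b a] z1 x1 -> R z1 y1 ->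
    exists2 y, R x1 y & connect [rel a b | e' b a] y1 y.
  move=> /= /sim /[apply] -[y Ry cy].
  by exists y; rewrite // connect_rev.
have czx : connect [rel a b | e b a] z x by rewrite connect_rev.
have [y Ry] := connect_fwd_sim sim_rev czx Rzy.
by rewrite connect_rev; exists y.
Qed.

Section Reduction.
Variables (P T : finType) (pre : P -> T -> bool) (post : T -> P -> bool) (ps : P) (ts : T).
Hypothesis pre_ps : forall t : T, pre ps t = (t == ts).
Hypothesis pre_ts : forall p : P, pre p ts = (p == ps).
Hypothesis post_disj : forall (t : T) (p : P), post t ps -> post ts p -> ~~ post t p.

Local Notation P' := {p : P | p != ps}.
Local Notation T' := {t : T | t != ts}.
Local Notation preM := (red_pre pre ps ts).
Local Notation postM := (red_post post ps ts).

Lemma post_ts_ps : post ts ps = false.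
Proof. by apply/negbTE/negP => h; move: (post_disj h h); rewrite h. Qed.

Lemma red_postE (t : T') (q : P') :
  postM t q = post (val t) (val q) + post (val t) ps * post ts (val q) :> nat.
Proof.
rewrite /red_post; have := post_disj (t := val t) (p := val q).
by case: (post _ (val q)) (post _ ps) (post ts _) => [] [] [] // /(_ isT isT).
Qed.

(* An M-marking as an N-marking, with ps empty; it is locked so that only the
   equations below are used to compute with it. *)
Fact emb_key : unit. Proof. by []. Qed.
Definition emb (m : marking P') : marking P := locked_with emb_key
  [ffun p => if insub p is Some q then m q else 0].

Lemma emb_val (m : marking P') (q : P') : emb m (val q) = m q.
Proof. by rewrite /emb unlock ffunE valK. Qed.

Lemma emb_ps (m : marking P') : emb m ps = 0.
Proof. by rewrite /emb unlock ffunE insubF // eqxx. Qed.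

(* An N-marking as an M-marking: the tokens on ps are moved through ts. *)
Definition proj (n : marking P) : marking P' :=
  [ffun q => n (val q) + n ps * post ts (val q)].

Lemma emb_unique (n : marking P) (m : marking P') :
  n ps = 0 -> (forall q : P', n (val q) = m q) -> emb m = n.
Proof.
move=> n_ps n_val; apply/ffunP => p; case: (insubP P' p) => [q _ <- | /negbNE/eqP ->].
  by rewrite emb_val n_val.
by rewrite emb_ps n_ps.
Qed.

(* An M-step by t is simulated in N by firing t, followed by ts if t fills ps;
   the disjointness hypothesis makes the two postsets add up to that of M. *)
Lemma emb_fire (m m' : marking P') :
  fire_step preM postM m m' -> reach pre post (emb m) (emb m').
Proof.
case=> -[t ht] [en ->] /=; have pre_ps_t : pre ps t = false by rewrite pre_ps (negbTE ht).
set n1 := [ffun p => emb m p - preT pre t p + postT post t p].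
have fire_t : fire_step pre post (emb m) n1.
  exists t; split=> // p; rewrite ffunE; case: (insubP P' p) => [q _ <- | /negbNE/eqP ->].
    by rewrite emb_val; move: (en q); rewrite ffunE.
  by rewrite pre_ps_t.
apply: reach_step fire_t _; case: (boolP (post t ps)) => hp.
  apply: reach_one; exists ts; split=> [p|].
    by rewrite !ffunE pre_ts; case: eqVneq => [->|]; rewrite ?emb_ps ?pre_ps_t ?hp.
  apply: emb_unique => [|q]; rewrite !ffunE ?emb_ps ?emb_val pre_ts.
    by rewrite eqxx pre_ps_t hp post_ts_ps.
  by rewrite (negbTE (valP q)) red_postE /red_pre /= hp mul1n subn0 addnA.
apply/reach_eq/esym; apply: emb_unique => [|q]; rewrite !ffunE ?emb_ps ?emb_val.
  by rewrite pre_ps_t (negbTE hp).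
by rewrite red_postE (negbTE hp) addn0.
Qed.

(* Conversely, in the view [proj] an N-step by ts changes nothing and an N-step
   by any other transition is the M-step by the same transition. *)
Lemma proj_fire (n n' : marking P) :
  fire_step pre post n n' -> reach preM postM (proj n) (proj n').
Proof.
case=> t [en ->]; have := en ps; rewrite !ffunE.
case: (eqVneq t ts) => [-> | ht] en_ps.
  apply/reach_eq/ffunP => q; move: en_ps.
  rewrite !ffunE !pre_ts eqxx (negbTE (valP q)) post_ts_ps.
  by case: (post ts _) => /=; lia.
apply: reach_one; exists (exist _ t ht); split=> [q|].
  by rewrite !ffunE /red_pre /=; apply: leq_trans (leq_addr _ _); move: (en (val q)); rewrite ffunE.
apply/ffunP => q; rewrite !ffunE red_postE /red_pre pre_ps (negbTE ht) /=.
by move: (en (val q)); case: q => p _ /=; rewrite ffunE subn0 mulnDl; lia.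
Qed.

Lemma proj_emb (m : marking P') : proj (emb m) = m.
Proof. by apply/ffunP => q; rewrite ffunE emb_ps emb_val mul0n addn0. Qed.

Lemma emb_madd (m1 m2 : marking P') : emb (madd m1 m2) = madd (emb m1) (emb m2).
Proof. by apply: emb_unique => [|q]; rewrite !ffunE ?emb_ps ?emb_val. Qed.

Lemma emb_scale_bag (A : {set P}) k :
  ps \notin A -> emb (mscale k (bag (red_set ps A))) = mscale k (bag A).
Proof.
move=> psA; apply: emb_unique => [|q]; rewrite !ffunE ?inE //.
by rewrite (negbTE psA) muln0.
Qed.

Lemma proj_scale_bag (A : {set P}) k :
  ps \notin A -> proj (mscale k (bag A)) = mscale k (bag (red_set ps A)).
Proof. by move=> psA; apply/ffunP => q; rewrite !ffunE inE (negbTE psA) muln0 mul0n addn0. Qed.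

Lemma reach_emb (m m' : marking P') :
  reach preM postM m m' -> reach pre post (emb m) (emb m').
Proof. by apply: reach_map; exact: emb_fire. Qed.

Lemma reach_proj (n n' : marking P) :
  reach pre post n n' -> reach preM postM (proj n) (proj n').
Proof. by apply: reach_map; exact: proj_fire. Qed.

Lemma red_sub_sound (I O : {set P}) :
  ps \notin I -> ps \notin O ->
  sub_sound pre post I O -> sub_sound preM postM (red_set ps I) (red_set ps O).
Proof.
move=> psI psO sound k k' m' le_k'k runM.
have runN := reach_emb runM.
rewrite emb_scale_bag // emb_madd emb_scale_bag // in runN.
have := reach_proj (sound k k' (emb m') le_k'k runN).
by rewrite proj_emb proj_scale_bag.
Qed.

Local Notation flowN := (flowRel pre post).
Local Notation flowM := (flowRel preM postM).

Definition embN (x : P' + T') : P + T :=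
  match x with inl q => inl (val q) | inr u => inr (val u) end.

Definition hidden (y : P + T) : bool := (y == inl ps) || (y == inr ts).

Lemma embN_inj : injective embN.
Proof. by case=> [q|u] [q'|u'] //= [/val_inj ->]. Qed.

Lemma hidden_inl (p : P) : hidden (inl p) = (p == ps).
Proof. by rewrite /hidden /eq_op /= orbF. Qed.

Lemma hidden_inr (t : T) : hidden (inr t) = (t == ts).
Proof. by rewrite /hidden /eq_op. Qed.

Lemma embN_visible (x : P' + T') : ~~ hidden (embN x).
Proof.
case: x => [q|u] /=; first by rewrite hidden_inl; exact: (valP q).
by rewrite hidden_inr; exact: (valP u).
Qed.

(* Forward simulation: a hidden node is represented by a transition of M that
   fills ps, since ps (and then ts) can only be entered this way. *)
Definition fills_ps (x : P' + T') : bool := if x is inr u then post (val u) ps else false.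
Definition fwd_rel (y : P + T) (x : P' + T') : Prop :=
  embN x = y \/ hidden y && fills_ps x.

(* Backward simulation: a hidden node is represented by a place of M that ts
   fills, since ts (and then ps) can only be left this way. *)
Definition filled_by_ts (x : P' + T') : bool := if x is inl q then post ts (val q) else false.
Definition bwd_rel (y : P + T) (x : P' + T') : Prop :=
  embN x = y \/ hidden y && filled_by_ts x.

Lemma sim_rel_refl (x : P' + T') : fwd_rel (embN x) x /\ bwd_rel (embN x) x.
Proof. by split; left. Qed.

Lemma fwd_rel_visible (x x' : P' + T') : fwd_rel (embN x) x' -> x' = x.
Proof. by case=> [/embN_inj //|]; rewrite (negbTE (embN_visible x)). Qed.

Lemma bwd_rel_visible (x x' : P' + T') : bwd_rel (embN x) x' -> x' = x.
Proof. by case=> [/embN_inj //|]; rewrite (negbTE (embN_visible x)). Qed.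

(* Each edge of N out of a node related to x is matched by an M-path from x:
   the edges  t -> ps  and  ps -> ts  are absorbed by the relation, and
   ts -> p  is replaced by the new edge  t -> p. *)
Lemma fwd_step (y z : P + T) (x : P' + T') :
  flowN y z -> fwd_rel y x -> exists2 x', fwd_rel z x' & connect flowM x x'.
Proof.
move=> e_yz [Ey | /andP[hid fills]].
  subst y; case: x z e_yz => [q|u] [p|t] //= e.
    have ht : t != ts by apply: contraTneq e => ->; rewrite pre_ts (negbTE (valP q)).
    by exists (inr (exist _ t ht)); [left | apply: connect1].
  case: (eqVneq p ps) => [Ep | hp].
    by subst p; exists (inr u); [right; rewrite hidden_inl eqxx |].
  by exists (inl (exist _ p hp)); [left | apply: connect1; rewrite /= /red_post e].
case: x fills => //= u fills.
case: y z hid e_yz => [p|t] [p'|t'] //=; rewrite ?hidden_inl ?hidden_inr => /eqP -> e.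
  move: e; rewrite pre_ps => /eqP ->.
  by exists (inr u); [right; rewrite hidden_inr eqxx |].
have hp : p' != ps by apply: contraTneq e => ->; rewrite post_ts_ps.
by exists (inl (exist _ p' hp)); [left | apply: connect1; rewrite /= /red_post fills e orbT].
Qed.

Lemma bwd_step (y z : P + T) (x' : P' + T') :
  flowN y z -> bwd_rel z x' -> exists2 x, bwd_rel y x & connect flowM x x'.
Proof.
move=> e_yz [Ez | /andP[hid filled]].
  subst z; case: x' e_yz => [q|u]; case: y => [p|t] //= e.
    case: (eqVneq t ts) => [Et | ht].
      by subst t; exists (inl q); [right; rewrite hidden_inr eqxx |].
    by exists (inr (exist _ t ht)); [left | apply: connect1; rewrite /= /red_post e].
  have hp : p != ps by apply: contraTneq e => ->; rewrite pre_ps (negbTE (valP u)).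
  by exists (inl (exist _ p hp)); [left | apply: connect1].
case: x' filled => //= q filled.
case: y z e_yz hid => [p|t] [p'|t'] //= e; rewrite ?hidden_inl ?hidden_inr => /eqP E; subst.
  move: e; rewrite pre_ts => /eqP ->.
  by exists (inl q); [right; rewrite hidden_inl eqxx |].
have ht : t != ts by apply: contraTneq e => ->; rewrite post_ts_ps.
by exists (inr (exist _ t ht)); [left | apply: connect1; rewrite /= /red_post e filled orbT].
Qed.

Lemma red_set_lift (A : {set P}) (i : P) :
  ps \notin A -> i \in A -> exists2 i' : P', i' \in red_set ps A & val i' = i.
Proof.
move=> psA iA; have ips : i != ps by apply: contraNneq psA => <-.
by exists (exist _ i ips); rewrite // inE.
Qed.

Lemma red_pWF (I O : {set P}) :
  ps \notin I -> ps \notin O ->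
  pWF pre post I O -> pWF preM postM (red_set ps I) (red_set ps O).
Proof.
move=> psI psO [/set0Pn[i iI] /set0Pn[o oO] from_I to_O]; split.
- by have [i' i'I _] := red_set_lift psI iI; apply/set0Pn; exists i'.
- by have [o' o'O _] := red_set_lift psO oO; apply/set0Pn; exists o'.
- move=> x; have [j jI c_jx] := from_I (embN x).
  have [j' j'I ?] := red_set_lift psI jI; subst j; exists j' => //.
  by have [_ /fwd_rel_visible ->] := connect_fwd_sim fwd_step c_jx (sim_rel_refl (inl j')).1.
- move=> x; have [j jO c_xj] := to_O (embN x).
  have [j' j'O ?] := red_set_lift psO jO; subst j; exists j' => //.
  by have [_ /bwd_rel_visible ->] := connect_bwd_sim bwd_step c_xj (sim_rel_refl (inl j')).2.
Qed.

End Reduction.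

Theorem mainTheorem12 (P T : finType) (pre : P -> T -> bool) (post : T -> P -> bool)
  (I O : {set P}) (ps : P) (ts : T) :
  pWF pre post I O ->
  (forall t : T, pre ps t = (t == ts)) ->
  (forall p : P, pre p ts = (p == ps)) ->
  ps \notin I :|: O ->
  (forall (t : T) (p : P), post t ps -> post ts p -> ~~ post t p) ->
  pWF (red_pre pre ps ts) (red_post post ps ts) (red_set ps I) (red_set ps O) /\
  (sub_sound pre post I O ->
   sub_sound (red_pre pre ps ts) (red_post post ps ts) (red_set ps I) (red_set ps O)).
Proof.
move=> wf pre_ps pre_ts ps_notIO post_disj.
have /andP[psI psO] : (ps \notin I) && (ps \notin O) by rewrite -negb_or -in_setU.
split; first exact: red_pWF.
exact: red_sub_sound.
Qed.
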